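(* Let $k\geq 0$ be an integer, $\xi=\pi/(3(k+4))$, and $P^k_+=\{(\lambda_1,\lambda_2)\in\mathbb{Z}^2:\lambda_1,\lambda_2\geq 0,\ \lambda_1+2\lambda_2\leq k\}$. For $\lambda,\mu\in P^k_+$ put $\hat\lambda_i=\lambda_i+1$, $\hat\mu_i=\mu_i+1$, $a=\hat\lambda_1+\hat\lambda_2$, $b=\hat\mu_1+\hat\mu_2$, and $$S_{\lambda,\mu}=\frac{-2}{(k+4)\sqrt3}\Big[\cos(2\xi(2ab+a\hat\mu_2+\hat\lambda_2 b+2\hat\lambda_2\hat\mu_2))+\cos(2\xi(-ab-2a\hat\mu_2+\hat\lambda_2 b-\hat\lambda_2\hat\mu_2))+\cos(2\xi(-ab+a\hat\mu_2-2\hat\lambda_2 b-\hat\lambda_2\hat\mu_2))-\cos(2\xi(-ab-2a\hat\mu_2-2\hat\lambda_2 b-\hat\lambda_2\hat\mu_2))-\cos(2\xi(2ab+a\hat\mu_2+\hat\lambda_2 b-\hat\lambda_2\hat\mu_2))-\cos(2\xi(-ab+a\hat\mu_2+\hat\lambda_2 b+2\hat\lambda_2\hat\mu_2))\Big].$$ For $j=1,2$ let $A_j$ be the matrix on $\ell^2(P^k_+)$ with entries $(A_j)_{\lambda,\mu}=\sum_{\sigma\in P^k_+} S_{\rho_j,\sigma}S_{\lambda,\sigma}S_{\mu,\sigma}/S_{0,\sigma}$, where $\rho_1=(1,0)$, $\rho_2=(0,1)$, $0=(0,0)$ (these are the adjacency matrices of the graphs $\mathcal{A}^{\rho_j}_k(G_2)$,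 the level-$k$ fusion graphs of $G_2$ for its two fundamental representations). Let $e_0$ be the basis vector at $(0,0)$. Then for all integers $m,n\geq 0$, $$\langle A_1^m A_2^n e_0, e_0\rangle=\frac{1}{192\pi^4}\int_{\mathbb{T}^2}\chi_1(\omega)^m\chi_2(\omega)^n\,J(\omega)^2\,\mathrm{d}^{(k+4)}(\omega),$$ i.e. the joint spectral measure of $\mathcal{A}^{\rho_1}_k(G_2),\mathcal{A}^{\rho_2}_k(G_2)$ over $\mathbb{T}^2$ is $\frac{1}{192\pi^4}J^2\,\mathrm{d}^{(k+4)}$, where $\mathrm{d}^{(k+4)}$ is the uniform probability measure on $$F_k^W=\{(e^{2\pi i q_1/3(k+4)},e^{2\pi i q_2/3(k+4)}) : q_1,q_2\in\{0,1,\ldots,3k+11\},\ q_1+q_2\equiv 0 \bmod 3\}.$$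
   Context: For $\omega=(e^{2\pi i\theta_1},e^{2\pi i\theta_2})\in\mathbb{T}^2$: $\chi_1(\omega)=1+2\cos(2\pi\theta_1)+2\cos(2\pi\theta_2)+2\cos(2\pi(\theta_1-\theta_2))$, $\chi_2(\omega)=\chi_1(\omega)+1+2\cos(2\pi(\theta_1+\theta_2))+2\cos(2\pi(2\theta_1-\theta_2))+2\cos(2\pi(\theta_1-2\theta_2))$ (characters of the 7- and 14-dimensional fundamental representations of $G_2$ restricted to the maximal torus), and $J(\omega)=8\pi^2\big(\cos(2\pi(2\theta_1+\theta_2))+\cos(2\pi(\theta_1-3\theta_2))+\cos(2\pi(3\theta_1-2\theta_2))-\cos(2\pi(\theta_1+2\theta_2))-\cos(2\pi(3\theta_1-\theta_2))-\cos(2\pi(2\theta_1-3\theta_2))\big)$. The matrix $S$ is the modular $S$-matrix of $G_2$ at level $k$ (real, symmetric, orthogonal), and $A_j$ is given by the Verlinde formula. *)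

From HB Require Import structures.
From mathcomp Require Import all_boot all_order all_algebra.
From mathcomp Require Import reals trigo.
Unset Printing Implicit Defensive.
Import Order.TTheory GRing.Theory Num.Theory.
Local Open Scope ring_scope.

Definition Pk (k : nat) := {x : 'I_k.+1 * 'I_k.+1 | (x.1 + 2 * x.2 <= k)%N}.

Definition Pk0 (k : nat) : Pk k := exist _ (ord0, ord0) isT.

Section G2.
Variable R : realType.

Definition xi (k : nat) : R := pi / (3 * (k + 4)%:R).

Definition Sent (k : nat) (l1 l2 m1 m2 : nat) : R :=
  let a : int := (l1 + l2 + 2)%:Z in
  let b : int := (m1 + m2 + 2)%:Z in
  let lh2 : int := (l2 + 1)%:Z in
  let mh2 : int := (m2 + 1)%:Z in
  let c (z : int) : R := cos (2 * xi k * z%:~R) in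
  (-2) / ((k + 4)%:R * Num.sqrt 3) *
  ( c (2 * a * b + a * mh2 + lh2 * b + 2 * lh2 * mh2)
  + c (- (a * b) - 2 * a * mh2 + lh2 * b - lh2 * mh2)
  + c (- (a * b) + a * mh2 - 2 * lh2 * b - lh2 * mh2)
  - c (- (a * b) - 2 * a * mh2 - 2 * lh2 * b - lh2 * mh2)
  - c (2 * a * b + a * mh2 + lh2 * b - lh2 * mh2)
  - c (- (a * b) + a * mh2 + lh2 * b + 2 * lh2 * mh2)).

Definition S (k : nat) (l m : Pk k) : R :=
  Sent k (val l).1 (val l).2 (val m).1 (val m).2.

Definition Amat (k : nat) (r1 r2 : nat) (l m : Pk k) : R :=
  \sum_(s : Pk k)
    Sent k r1 r2 (val s).1 (val s).2 * S k l s * S k m s / Sent k 0 0 (val s).1 (val s).2.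

Definition A1 (k : nat) := Amat k 1 0.
Definition A2 (k : nat) := Amat k 0 1.

Definition mapply (k : nat) (A : Pk k -> Pk k -> R) (v : Pk k -> R) : Pk k -> R :=
  fun l => \sum_(s : Pk k) A l s * v s.

Definition e0 (k : nat) : Pk k -> R := fun l => if l == Pk0 k then 1 else 0.

Definition moment (k m n : nat) : R :=
  iter m (mapply k (A1 k)) (iter n (mapply k (A2 k)) (e0 k)) (Pk0 k).

(* functions on T^2, parametrized by omega = (e^{2 pi i t1}, e^{2 pi i t2}) *)
Definition chi1 (t1 t2 : R) : R :=
  1 + 2 * cos (2 * pi * t1) + 2 * cos (2 * pi * t2) + 2 * cos (2 * pi * (t1 - t2)).

Definition chi2 (t1 t2 : R) : R :=
  chi1 t1 t2 + 1 + 2 * cos (2 * pi * (t1 + t2)) + 2 * cos (2 * pi * (2 * t1 - t2))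
  + 2 * cos (2 * pi * (t1 - 2 * t2)).

Definition J (t1 t2 : R) : R :=
  8 * pi ^+ 2 *
  ( cos (2 * pi * (2 * t1 + t2)) + cos (2 * pi * (t1 - 3 * t2))
  + cos (2 * pi * (3 * t1 - 2 * t2)) - cos (2 * pi * (t1 + 2 * t2))
  - cos (2 * pi * (3 * t1 - t2)) - cos (2 * pi * (2 * t1 - 3 * t2))).

(* F_k^W indexed by (q1,q2) in {0,...,3k+11}^2 with q1 + q2 = 0 mod 3;
   these index distinct points of T^2. *)
Definition FkW_pred (k : nat) (q : 'I_(3 * (k + 4)) * 'I_(3 * (k + 4))) : bool :=
  ((q.1 + q.2) %% 3 == 0)%N.

Definition dk_integral (k : nat) (f : R -> R -> R) : R :=
  (\sum_(q : 'I_(3 * (k + 4)) * 'I_(3 * (k + 4)) | FkW_pred k q)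
      f ((q.1)%:R / (3 * (k + 4))%:R) ((q.2)%:R / (3 * (k + 4))%:R))
  / (#|[set q : 'I_(3 * (k + 4)) * 'I_(3 * (k + 4)) | FkW_pred k q]|)%:R.

End G2.

Arguments chi1 {R}. Arguments chi2 {R}. Arguments J {R}.
Arguments dk_integral {R}. Arguments moment {R}.

From HB Require Import structures.
From mathcomp Require Import all_boot all_order all_algebra.
From mathcomp Require Import reals trigo.
From mathcomp Require Import ring lra zify.
Set Implicit Arguments. Unset Strict Implicit. Unset Printing Implicit Defensive.
Import Order.TTheory GRing.Theory Num.Theory.
Local Open Scope ring_scope.

(* In rho-shifted coordinates, S_{l,m} = c B(l + rho, m + rho) with
   c = -2 / ((k+4) sqrt 3), where B(y, x) = sum_w det(w) cos (2 xi <w y, x>) is the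
   alternating sum over the Weyl group W of G2.  B is W-anti-invariant in x,
   periodic modulo the lattice L = 3(k+4)Z x (k+4)Z and zero on the walls of the
   alcove; modulo L every point of Z^2 lies on a wall or is the W-image of exactly
   one rho-shifted weight of P^k_+.  So the sum over P^k_+ of a W- and L-invariant
   function is 1/12 of its sum over a period box, where orthogonality of the
   characters of Z^2 / L gives S^2 = 1.  Hence A_j = S diag(S_{rho_j,s} / S_{0,s}) S,
   and the Weyl character formula B(rho + omega_j, x) = chi_j(x) B(rho, x) turns the
   moment into sum_s S_{0,s}^2 chi_1^m chi_2^n at the torus points of the s.  There
   B(rho, .) = J / (8 pi^2), and the period box is in bijection with F_k^W, so
   unfolding once more yields the average over F_k^W.  The trigonometric identities
   involved are decided by computation on formal cosine sums. *)

Section TrigSums.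
Variable R : realType.

Lemma cosD2piz (x : R) (z : int) : cos (x + pi *+ 2 * z%:~R) = cos x.
Proof.
case: z => n.
  by rewrite -pmulrn mulr_natr (periodicn (@cosD2pi R)).
rewrite NegzE mulrNz mulrN -pmulrn mulr_natr.
by rewrite -{2}[x](subrK ((pi *+ 2) *+ n.+1)) (periodicn (@cosD2pi R)).
Qed.

Lemma sinD2piz (x : R) (z : int) : sin (x + pi *+ 2 * z%:~R) = sin x.
Proof.
case: z => n.
  by rewrite -pmulrn mulr_natr (periodicn (@sinD2pi R)).
rewrite NegzE mulrNz mulrN -pmulrn mulr_natr.
by rewrite -{2}[x](subrK ((pi *+ 2) *+ n.+1)) (periodicn (@sinD2pi R)).
Qed.

Lemma sinDpiz_neq0 (y : R) (q : int) : sin y != 0 -> sin (y + pi * q%:~R) != 0.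
Proof.
move=> hy; rewrite (divz_eq q 2); set p := (q %/ 2)%Z.
have q2_ge0 := modz_ge0 q (isT : 2 != 0 :> int).
have q2_lt2 := ltz_pmod q (isT : 0 < 2 :> int).
have [->|->] : (q %% 2)%Z = 0 \/ (q %% 2)%Z = 1 by lia.
- have -> : y + pi * (p * 2 + 0)%:~R = y + pi *+ 2 * p%:~R by rewrite rmorphD rmorphM /=; ring.
  by rewrite sinD2piz.
- have -> : y + pi * (p * 2 + 1)%:~R = (y + pi) + pi *+ 2 * p%:~R by rewrite rmorphD rmorphM /=; ring.
  by rewrite sinD2piz sinDpi oppr_eq0.
Qed.

Lemma sum_cos_progression (n : nat) (a : int) (th : R) : (0 < n)%N ->
  \sum_(j < n) cos (th + pi *+ 2 * a%:~R * j%:R / n%:R) =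
  if (n%:Z %| a)%Z then n%:R * cos th else 0.
Proof.
move=> n0; have hn : (n%:R : R) != 0 by rewrite pnatr_eq0 -lt0n.
have [/dvdzP [q ->]|ndvd] := boolP (n%:Z %| a)%Z.
  rewrite (eq_bigr (fun _ => cos th)) ?sumr_const ?card_ord ?mulr_natl // => j _.
  have -> : th + pi *+ 2 * (q * n%:Z)%:~R * j%:R / n%:R = th + pi *+ 2 * (q * j%:Z)%:~R.
    by rewrite !rmorphM /=; field.
  by rewrite cosD2piz.
pose h : R := pi * a%:~R / n%:R.
(* telescoping: 2 sin h cos (th + 2 h j) = sin (th + (2 j + 1) h) - sin (th + (2 j - 1) h) *)
have telescope : forall j : nat, (sin h *+ 2) * cos (th + pi *+ 2 * a%:~R * j%:R / n%:R)
     = sin (th + h * (j.+1)%:R *+ 2 - h) - sin (th + h * j%:R *+ 2 - h).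
  move=> j.
  have -> : th + h * (j.+1)%:R *+ 2 - h = (th + pi *+ 2 * a%:~R * j%:R / n%:R) + h.
    by rewrite /h -natr1; field.
  have -> : th + h * j%:R *+ 2 - h = (th + pi *+ 2 * a%:~R * j%:R / n%:R) - h.
    by rewrite /h; field.
  rewrite sinD sinB; ring.
have sinh_neq0 : sin h != 0.
  have ha := divz_eq a n%:Z.
  set q := (a %/ n%:Z)%Z in ha; set r := (a %% n%:Z)%Z in ha.
  have r0 : 0 <= r by rewrite /r; apply: modz_ge0; lia.
  have r1 : r < n%:Z by rewrite /r ltz_pmod // ltz_nat.
  have rn0 : r != 0 by apply: contraNneq ndvd => r_eq0; exact/dvdz_mod0P.
  have -> : h = pi * r%:~R / n%:R + pi * q%:~R.
    by rewrite /h {1}ha rmorphD rmorphM /=; field.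
  apply: sinDpiz_neq0; rewrite gt_eqF //; apply: sin_gt0_pi; apply/andP; split.
    by rewrite divr_gt0 ?ltr0n // mulr_gt0 ?pi_gt0 // ltr0z lt_neqAle eq_sym rn0 r0.
  rewrite ltr_pdivrMr ?ltr0n // ltr_pM2l ?pi_gt0 //.
  by rewrite (_ : (n%:R : R) = (n%:Z)%:~R) // ltr_int.
suff: sin h *+ 2 * (\sum_(j < n) cos (th + pi *+ 2 * a%:~R * j%:R / n%:R)) = 0.
  by move/eqP; rewrite mulf_eq0 mulrn_eq0 /= (negbTE sinh_neq0) /= => /eqP.
rewrite mulr_sumr.
under eq_bigr => j _ do rewrite telescope.
rewrite -(big_mkord xpredT (fun j => sin (th + h * (j.+1)%:R *+ 2 - h) - sin (th + h * j%:R *+ 2 - h))).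
rewrite (telescope_sumr (fun j => sin (th + h * j%:R *+ 2 - h))) //.
have -> : th + h * n%:R *+ 2 - h = (th + h * 0%:R *+ 2 - h) + pi *+ 2 * a%:~R.
  by rewrite /h; field.
by rewrite sinD2piz subrr.
Qed.

End TrigSums.

Definition bform := seq int.

Definition bform_eval (f : bform) (y x : int * int) : int :=
  f`_0 * y.1 * x.1 + f`_1 * y.1 * x.2 + f`_2 * y.2 * x.1 + f`_3 * y.2 * x.2
  + f`_4 * x.1 + f`_5 * x.2.

Definition bform_add (f g : bform) : bform :=
  [:: f`_0 + g`_0; f`_1 + g`_1; f`_2 + g`_2; f`_3 + g`_3; f`_4 + g`_4; f`_5 + g`_5].

Definition bform_opp (f : bform) : bform :=
  [:: - f`_0; - f`_1; - f`_2; - f`_3; - f`_4; - f`_5].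

Lemma bform_evalD f g y x : bform_eval (bform_add f g) y x = bform_eval f y x + bform_eval g y x.
Proof. rewrite /bform_eval /bform_add /=; ring. Qed.

Lemma bform_evalN f y x : bform_eval (bform_opp f) y x = - bform_eval f y x.
Proof. rewrite /bform_eval /bform_opp /=; ring. Qed.

Definition mat2 := (int * int * int * int)%type.

Definition mat2_apply (M : mat2) (x : int * int) : int * int :=
  let: (a, b, c, d) := M in (a * x.1 + b * x.2, c * x.1 + d * x.2).

Definition bform_subst (M : mat2) (f : bform) : bform :=
  let: (a, b, c, d) := M in
  [:: f`_0 * a + f`_1 * c; f`_0 * b + f`_1 * d; f`_2 * a + f`_3 * c;
      f`_2 * b + f`_3 * d; f`_4 * a + f`_5 * c; f`_4 * b + f`_5 * d].

Lemma bform_eval_subst M f y x :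
  bform_eval f y (mat2_apply M x) = bform_eval (bform_subst M f) y x.
Proof. case: M => [[[a b] c] d]; rewrite /bform_eval /bform_subst /mat2_apply /=; ring. Qed.

Definition bform_at (y0 : int * int) (f : bform) : bform :=
  [:: 0; 0; 0; 0; f`_4 + f`_0 * y0.1 + f`_2 * y0.2; f`_5 + f`_1 * y0.1 + f`_3 * y0.2].

Lemma bform_eval_at y0 f y x : bform_eval f y0 x = bform_eval (bform_at y0 f) y x.
Proof. rewrite /bform_eval /bform_at /=; ring. Qed.

Definition bform_swap (f : bform) : bform := [:: f`_0; f`_2; f`_1; f`_3; 0; 0].

Lemma bform_eval_swap f y x : f`_4 = 0 -> f`_5 = 0 ->
  bform_eval f y x = bform_eval (bform_swap f) x y.
Proof. by move=> h4 h5; rewrite /bform_eval /bform_swap /= h4 h5; ring. Qed.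

Definition lin_bform (a b : int) : bform := [:: 0; 0; 0; 0; a; b].

Lemma bform_eval_lin a b y x : bform_eval (lin_bform a b) y x = a * x.1 + b * x.2.
Proof. rewrite /bform_eval /lin_bform /=; ring. Qed.

Fixpoint lead_neg (f : bform) : bool :=
  if f is z :: f' then (if z == 0 then lead_neg f' else z < 0) else false.

(* Representative of [f] up to sign; cos is even, so only this matters. *)
Definition bform_norm (f : bform) : bform := if lead_neg f then bform_opp f else f.

(* A formal cosine sum: the list of terms (c, f) stands for
   sum c cos (2 xi f(y, x)) (see [cpoly_eval] below). *)
Definition cpoly := seq (int * bform).

Fixpoint coef_of (f : bform) (L : cpoly) : int :=
  if L is u :: L' then
    (if bform_norm u.2 == f then u.1 + coef_of f L' else coef_of f L')
  else 0.

Fixpoint cancels_rec (fuel : nat) (L : cpoly) : bool :=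
  match fuel, L with
  | 0%N, _ => nilp L
  | _.+1, [::] => true
  | fuel'.+1, t :: L' =>
      (t.1 + coef_of (bform_norm t.2) L' == 0)
      && cancels_rec fuel' [seq u <- L' | bform_norm u.2 != bform_norm t.2]
  end.

(* Holds when, after grouping the frequencies of [L] up to sign, every
   coefficient vanishes. *)
Definition cancels (L : cpoly) := cancels_rec (size L) L.

Definition cpoly_scale (c : int) (L : cpoly) : cpoly := [seq (c * t.1, t.2) | t <- L].

Definition cpoly_map (g : bform -> bform) (L : cpoly) : cpoly := [seq (t.1, g t.2) | t <- L].

(* Product formula 2 cos a cos b = cos (a + b) + cos (a - b), termwise. *)
Fixpoint cpoly_mul1 (t : int * bform) (L : cpoly) : cpoly :=
  if L is u :: L' then
    (t.1 * u.1, bform_add t.2 u.2) :: (t.1 * u.1, bform_add t.2 (bform_opp u.2))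
      :: cpoly_mul1 t L'
  else [::].

Fixpoint cpoly_mul (L1 L2 : cpoly) : cpoly :=
  if L1 is t :: L1' then cpoly_mul1 t L2 ++ cpoly_mul L1' L2 else [::].

Definition kshift (k : nat) : nat := (k + 4)%N.
Definition kperiod (k : nat) : nat := (3 * kshift k)%N.

Lemma kshift_gt0 k : (0 < kshift k)%N. Proof. by rewrite /kshift addn4. Qed.
Lemma kperiod_gt0 k : (0 < kperiod k)%N. Proof. by rewrite /kperiod muln_gt0 kshift_gt0. Qed.
Lemma kperiodZ k : (kperiod k)%:Z = 3 * (kshift k)%:Z. Proof. by rewrite /kperiod PoszM. Qed.

Section CosinePolynomials.
Variable R : realType.
Variable k : nat.

Definition ecos (z : int) : R := cos (2 * xi R k * z%:~R).

Lemma xiE : 2 * xi R k = pi *+ 2 / (kperiod k)%:R.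
Proof.
rewrite /xi /kperiod /kshift natrM -mulr_natl.
have h : ((k + 4)%:R : R) != 0 by rewrite pnatr_eq0 addn4.
by field; rewrite -natrD.
Qed.

Lemma ecosN z : ecos (- z) = ecos z.
Proof. by rewrite /ecos rmorphN mulrN cosN. Qed.

Lemma ecos0 : ecos 0 = 1.
Proof. by rewrite /ecos mulr0 cos0. Qed.

Lemma ecosDperiod z j : ecos (z + (kperiod k)%:Z * j) = ecos z.
Proof.
rewrite /ecos rmorphD mulrDr xiE.
have hN : ((kperiod k)%:R : R) != 0 by rewrite pnatr_eq0 -lt0n kperiod_gt0.
have -> : pi *+ 2 / (kperiod k)%:R * ((kperiod k)%:Z * j)%:~R = pi *+ 2 * j%:~R :> R.
  by rewrite rmorphM /=; field.
by rewrite cosD2piz.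
Qed.

Lemma ecos_prod a b : 2 * ecos a * ecos b = ecos (a + b) + ecos (a - b).
Proof. rewrite /ecos !rmorphD !rmorphN /= !mulrDr !mulrN cosD cosB; ring. Qed.

Lemma ecos_norm f y x : ecos (bform_eval (bform_norm f) y x) = ecos (bform_eval f y x).
Proof. by rewrite /bform_norm; case: lead_neg => //; rewrite bform_evalN ecosN. Qed.

Definition cpoly_eval (L : cpoly) (y x : int * int) : R :=
  \sum_(t <- L) t.1%:~R * ecos (bform_eval t.2 y x).

Lemma cpoly_eval_cons t L y x :
  cpoly_eval (t :: L) y x = t.1%:~R * ecos (bform_eval t.2 y x) + cpoly_eval L y x.
Proof. by rewrite /cpoly_eval big_cons. Qed.

Lemma cpoly_eval_cat L1 L2 y x : cpoly_eval (L1 ++ L2) y x = cpoly_eval L1 y x + cpoly_eval L2 y x.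
Proof. by rewrite /cpoly_eval big_cat. Qed.

Lemma cpoly_eval_scale c L y x : cpoly_eval (cpoly_scale c L) y x = c%:~R * cpoly_eval L y x.
Proof.
rewrite /cpoly_eval big_map mulr_sumr; apply: eq_bigr => t _.
by rewrite rmorphM /= mulrA.
Qed.

Lemma cpoly_eval_map (g : bform -> bform) L y x y' x' :
  (forall t, t \in L -> bform_eval (g t.2) y x = bform_eval t.2 y' x') ->
  cpoly_eval (cpoly_map g L) y x = cpoly_eval L y' x'.
Proof.
move=> h; rewrite /cpoly_eval big_map big_seq [RHS]big_seq.
by apply: eq_bigr => t ht /=; rewrite h.
Qed.

Lemma coef_ofE f L y x :
  \sum_(u <- L | bform_norm u.2 == f) u.1%:~R * ecos (bform_eval u.2 y x)
  = (coef_of f L)%:~R * ecos (bform_eval f y x).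
Proof.
elim: L => [|u L IH] /=; first by rewrite big_nil mul0r.
rewrite big_cons; case: eqP => [hf|_]; last exact: IH.
by rewrite IH rmorphD mulrDl -hf ecos_norm.
Qed.

Lemma cancels_rec_eval0 n L y x : (size L <= n)%N -> cancels_rec n L -> cpoly_eval L y x = 0.
Proof.
elim: n L => [|n IH] [|t L] //=; try by rewrite /cpoly_eval big_nil.
move=> hs /andP [/eqP coef0 hc].
rewrite cpoly_eval_cons /cpoly_eval (bigID (fun u => bform_norm u.2 == bform_norm t.2)) /=.
rewrite coef_ofE -big_filter -/(cpoly_eval _ y x) (IH _ _ hc); last first.
  by rewrite size_filter (leq_trans (count_size _ _)).
by rewrite addr0 -(ecos_norm t.2) -mulrDl -rmorphD /= coef0 mul0r.
Qed.

Lemma cpoly_eval_cancels L1 L2 y x :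
  cancels (L1 ++ cpoly_scale (-1) L2) -> cpoly_eval L1 y x = cpoly_eval L2 y x.
Proof.
move=> /cancels_rec_eval0 => /(_ y x (leqnn _)) /eqP.
by rewrite cpoly_eval_cat cpoly_eval_scale rmorphN1 mulN1r subr_eq0 => /eqP.
Qed.

Lemma cpoly_eval_mul1 t L y x :
  2 * (t.1%:~R * ecos (bform_eval t.2 y x)) * cpoly_eval L y x = cpoly_eval (cpoly_mul1 t L) y x.
Proof.
elim: L => [|u L IH] /=; first by rewrite /cpoly_eval !big_nil mulr0.
rewrite !cpoly_eval_cons /= -IH !bform_evalD bform_evalN !rmorphM /=.
set p := bform_eval t.2 y x; set q := bform_eval u.2 y x.
have -> : ecos (p + q) = 2 * ecos p * ecos q - ecos (p - q) by rewrite ecos_prod; ring.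
ring.
Qed.

Lemma cpoly_eval_mul L1 L2 y x :
  2 * cpoly_eval L1 y x * cpoly_eval L2 y x = cpoly_eval (cpoly_mul L1 L2) y x.
Proof.
elim: L1 => [|t L1 IH] /=; first by rewrite /cpoly_eval !big_nil mulr0 mul0r.
by rewrite cpoly_eval_cat -IH -cpoly_eval_mul1 cpoly_eval_cons; ring.
Qed.

End CosinePolynomials.

(* The twelve elements of the Weyl group of G2, acting on (rho-shifted)
   weights in fundamental-weight coordinates; [weyl (11 - i) = - weyl i]. *)
Definition weyl_mats : seq mat2 :=
  [:: (1, 0, 0, 1); (-1, 0, 1, 1); (1, 3, 0, -1); (2, 3, -1, -1); (-1, -3, 1, 2); (-2, -3, 1, 2);
      (2, 3, -1, -2); (1, 3, -1, -2); (-2, -3, 1, 1); (-1, -3, 0, 1); (1, 0, -1, -1); (-1, 0, 0, -1)].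

Definition weyl (i : nat) : mat2 := nth (1, 0, 0, 1) weyl_mats i.

Definition det2 (M : mat2) : int := let: (a, b, c, d) := M in a * d - b * c.

(* det M times the adjugate: the inverse when det M = +-1, as for [weyl i]. *)
Definition mat2_inv (M : mat2) : mat2 :=
  let: (a, b, c, d) := M in let e := a * d - b * c in (e * d, - e * b, - e * c, e * a).

(* Index of a Weyl chamber containing [x] (chosen arbitrarily on walls), read
   off the signs of the pairings of [x] with the positive coroots. *)
Definition chamber (x : int * int) : nat :=
  let: (x1, x2) := x in
  if 0 < x2 then
    if 0 < x1 + x2 then
      if 0 < x1 + 2 * x2 then (if 0 < x1 then 0%N else 1%N) else 0%N
    else if 0 < x1 + 2 * x2 then
      if 0 < x1 then 0%N
      else if 0 < x1 + 3 * x2 then (if 0 < 2 * x1 + 3 * x2 then 4%N else 5%N) else 0%N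
    else if 0 < x1 then 0%N else if 0 < x1 + 3 * x2 then 8%N else 9%N
  else if 0 < x1 + x2 then
    if 0 < x1 + 2 * x2 then
      if 0 < x1 then (if 0 < x1 + 3 * x2 then 2%N else 3%N) else 0%N
    else if 0 < x1 then
      if 0 < x1 + 3 * x2 then 0%N else if 0 < 2 * x1 + 3 * x2 then 6%N else 7%N
    else 0%N
  else if 0 < x1 + 2 * x2 then 0%N
  else if 0 < x1 then 10%N else 11%N.

Lemma chamberP x : [/\ (chamber x < 12)%N, 0 <= (mat2_apply (mat2_inv (weyl (chamber x))) x).1
   & 0 <= (mat2_apply (mat2_inv (weyl (chamber x))) x).2].
Proof. by case: x => x1 x2; rewrite /chamber /=; repeat case: ifP => ? /=; split; lia. Qed.

Lemma chamber_weyl i z : (i < 12)%N -> 0 < z.1 -> 0 < z.2 -> chamber (mat2_apply (weyl i) z) = i.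
Proof.
case: z => z1 z2 /=.
do 12! (case: i => [|i]; first by move=> _ h1 h2; rewrite /chamber /=; repeat case: ifP => ? /=; lia).
by [].
Qed.

Lemma weyl_invK i x : (i < 12)%N -> mat2_apply (weyl i) (mat2_apply (mat2_inv (weyl i)) x) = x.
Proof.
case: x => x1 x2.
do 12! (case: i => [|i]; first by move=> _; rewrite /mat2_apply /=; congr pair; ring).
by [].
Qed.

Lemma weylK i x : (i < 12)%N -> mat2_apply (mat2_inv (weyl i)) (mat2_apply (weyl i) x) = x.
Proof.
case: x => x1 x2.
do 12! (case: i => [|i]; first by move=> _; rewrite /mat2_apply /=; congr pair; ring).
by [].
Qed.

Lemma weyl_opp i y : (i < 12)%N ->
  mat2_apply (weyl (11 - i)) y = (- (mat2_apply (weyl i) y).1, - (mat2_apply (weyl i) y).2).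
Proof.
case: y => y1 y2.
do 12! (case: i => [|i]; first by move=> _; rewrite /mat2_apply /=; congr pair; ring).
by [].
Qed.

Lemma det2_weyl_sqr i : (i < 12)%N -> det2 (weyl i) * det2 (weyl i) = 1.
Proof. by move=> hi; do 12! (case: i hi => [|i] hi; first by []). Qed.

Section AffineWeylGroup.
Variable K : int.
Hypothesis K_gt0 : 0 < K.

(* A fundamental domain of the lattice 3K Z x K Z of periods. *)
Definition in_hex (x : int * int) :=
  [/\ - K <= x.2 <= K, - K <= x.1 + x.2 <= K & - K <= x.1 + 2 * x.2 <= K].
Definition in_hex_open (x : int * int) :=
  [/\ - K < x.2 < K, - K < x.1 + x.2 < K & - K < x.1 + 2 * x.2 < K].
Definition in_alcove (z : int * int) := [/\ 1 <= z.1, 1 <= z.2 & z.1 + 2 * z.2 <= K - 1].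

Definition lattice_eq (y y' : int * int) := exists u v, y = (y'.1 + 3 * K * u, y'.2 + K * v).

Lemma lattice_eq_sym x y : lattice_eq x y -> lattice_eq y x.
Proof.
case=> u [v ->]; exists (- u), (- v) => /=.
by case: y => y1 y2 /=; congr pair; ring.
Qed.

Lemma lattice_eq_trans x y z : lattice_eq x y -> lattice_eq y z -> lattice_eq x z.
Proof.
case=> u [v ->] [u' [v' ->]]; exists (u + u'), (v + v') => /=; congr pair; ring.
Qed.

Lemma in_hex_weyl_inv i x : (i < 12)%N -> in_hex x -> in_hex (mat2_apply (mat2_inv (weyl i)) x).
Proof.
case: x => x1 x2; rewrite /in_hex /=.
do 12! (case: i => [|i]; first by move=> _ [/andP[? ?] /andP[? ?] /andP[? ?]];
   rewrite /mat2_apply /=; split; apply/andP; split; lia).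
by [].
Qed.

Lemma in_alcove_weyl i z : (i < 12)%N -> in_alcove z -> in_hex_open (mat2_apply (weyl i) z).
Proof.
case: z => z1 z2; rewrite /in_alcove /in_hex_open /=.
do 12! (case: i => [|i]; first by move=> _ [? ? ?]; rewrite /mat2_apply /=;
   split; apply/andP; split; lia).
by [].
Qed.

Lemma small_multiple (v : int) : - (K * 2) < K * v < K * 2 -> -1 <= v <= 1.
Proof. by move=> /andP [h1 h2]; apply/andP; split; nia. Qed.

Lemma in_hex_open_lattice_eq y y' u v : in_hex_open y -> in_hex_open y' ->
  y = (y'.1 + 3 * K * u, y'.2 + K * v) -> u = 0 /\ v = 0.
Proof.
case: y => y1 y2; case: y' => z1 z2; rewrite /in_hex_open /=.
move=> [/andP[a1 a2] /andP[b1 b2] /andP[c1 c2]] [/andP[d1 d2] /andP[e1 e2] /andP[f1 f2]] [h1 h2].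
have hv : -1 <= v <= 1 by apply: small_multiple; apply/andP; split; nia.
have hw : -1 <= 3 * u + v <= 1 by apply: small_multiple; apply/andP; split; nia.
have hx : -1 <= 3 * u + 2 * v <= 1 by apply: small_multiple; apply/andP; split; nia.
lia.
Qed.

Lemma hex_reduce x : exists u v, in_hex (x.1 - 3 * K * u, x.2 - K * v).
Proof.
case: x => x1 x2 /=.
have Kn : K != 0 by rewrite gt_eqF.
have ha := divz_eq x2 K; have hb := divz_eq (x1 + x2) K.
set i := (x2 %/ K)%Z in ha *; set r := (x2 %% K)%Z in ha *.
set j := ((x1 + x2) %/ K)%Z in hb *; set s := ((x1 + x2) %% K)%Z in hb *.
have hc := divz_eq (j - i) 3.
set m := ((j - i) %/ 3)%Z in hc *; set c := ((j - i) %% 3)%Z in hc *.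
have r0 : 0 <= r by rewrite modz_ge0.
have r1 : r < K by rewrite ltz_pmod.
have s0 : 0 <= s by rewrite modz_ge0.
have s1 : s < K by rewrite ltz_pmod.
have c0 : 0 <= c by rewrite modz_ge0.
have c1 : c < 3 by rewrite ltz_pmod.
have hj : j = i + 3 * m + c by lia.
have [hc0|[hc1|hc2]] : c = 0 \/ c = 1 \/ c = 2 by lia.
- case: (leP (r + s) K) => hrs.
  + exists m, i; rewrite /in_hex /=.
    have e1 : x2 - K * i = r by lia.
    have e2 : x1 - 3 * K * m + (x2 - K * i) = s by nia.
    split; apply/andP; split; nia.
  + exists m, (i + 1); rewrite /in_hex /=.
    have e1 : x2 - K * (i + 1) = r - K by nia.
    have e2 : x1 - 3 * K * m + (x2 - K * (i + 1)) = s - K by nia.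
    split; apply/andP; split; nia.
- exists m, (i + 1); rewrite /in_hex /=.
  have e1 : x2 - K * (i + 1) = r - K by nia.
  have e2 : x1 - 3 * K * m + (x2 - K * (i + 1)) = s by nia.
  split; apply/andP; split; nia.
- exists (m + 1), i; rewrite /in_hex /=.
  have e1 : x2 - K * i = r by nia.
  have e2 : x1 - 3 * K * (m + 1) + (x2 - K * i) = s - K by nia.
  split; apply/andP; split; nia.
Qed.

Lemma fold_to_chamber x : exists i z,
  [/\ (i < 12)%N, in_hex z, 0 <= z.1, 0 <= z.2 & lattice_eq x (mat2_apply (weyl i) z)].
Proof.
have [u [v hH]] := hex_reduce x.
set x' := (x.1 - 3 * K * u, x.2 - K * v) in hH.
have [hi d1 d2] := chamberP x'.
exists (chamber x'), (mat2_apply (mat2_inv (weyl (chamber x'))) x'); split => //.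
  exact: in_hex_weyl_inv.
by rewrite weyl_invK //; exists u, v; rewrite /x' /= !subrK; case: (x).
Qed.

Lemma fold_alcove_inj i j z z' : (i < 12)%N -> (j < 12)%N -> in_alcove z -> in_alcove z' ->
  lattice_eq (mat2_apply (weyl i) z) (mat2_apply (weyl j) z') -> i = j /\ z = z'.
Proof.
move=> hi hj hz hz' [u [v he]].
have [u0 v0] := in_hex_open_lattice_eq (in_alcove_weyl hi hz) (in_alcove_weyl hj hz') he.
have he' : mat2_apply (weyl i) z = mat2_apply (weyl j) z'.
  by rewrite he u0 v0 !mulr0 !addr0; case: (mat2_apply (weyl j) z').
have eij : i = j.
  case: hz => h1 h2 _; case: hz' => h1' h2' _.
  have c1 : chamber (mat2_apply (weyl i) z) = i by apply: chamber_weyl => //; lia.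
  have c2 : chamber (mat2_apply (weyl j) z') = j by apply: chamber_weyl => //; lia.
  by rewrite -c1 -c2 he'.
split => //; subst j.
by rewrite -(weylK z hi) he' weylK.
Qed.

End AffineWeylGroup.

(* The Weyl-alternating sum sum_w det(w) cos (2 xi <w y, x>), for the pairing
   <y, x> = (2 y1 + 3 y2) x1 + 3 (y1 + 2 y2) x2. *)
Definition walt_cpoly : cpoly :=
  [:: (1, [:: 2; 3; 3; 6; 0; 0]); (1, [:: -1; -3; 0; -3; 0; 0]); (1, [:: -1; 0; -3; -3; 0; 0]);
      (-1, [:: -1; -3; -3; -6; 0; 0]); (-1, [:: 2; 3; 3; 3; 0; 0]); (-1, [:: -1; 0; 0; 3; 0; 0])].

Definition char1_cpoly : cpoly :=
  [:: (1, lin_bform 0 0); (2, lin_bform 2 3); (2, lin_bform 1 3); (2, lin_bform 1 0)].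

Definition char2_cpoly : cpoly :=
  char1_cpoly ++
  [:: (1, lin_bform 0 0); (2, lin_bform 3 6); (2, lin_bform 3 3); (2, lin_bform 0 (-3))].

(* The Weyl character formula walt y x = L(x) walt rho x, rho = (1, 1), doubled
   so as to use [cpoly_mul]. *)
Definition weyl_character_cancels (L : cpoly) (y : int * int) :=
  cancels (cpoly_mul L (cpoly_map (bform_at (1, 1)) walt_cpoly)
           ++ cpoly_scale (-1) (cpoly_scale 2 (cpoly_map (bform_at y) walt_cpoly))).

Lemma weyl_character_cancels1 : weyl_character_cancels char1_cpoly (2, 1).
Proof. by vm_compute. Qed.

Lemma weyl_character_cancels2 : weyl_character_cancels char2_cpoly (1, 2).
Proof. by vm_compute. Qed.

Definition weyl_cancels (L : cpoly) (det : int) (i : nat) :=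
  cancels (cpoly_map (bform_subst (weyl i)) L ++ cpoly_scale (-1) (cpoly_scale det L)).

Lemma weyl_cancels_walt :
  all (fun i => weyl_cancels walt_cpoly (det2 (weyl i)) i) (iota 0 12).
Proof. by vm_compute. Qed.

Lemma weyl_cancels_char1 : all (weyl_cancels char1_cpoly 1) (iota 0 12).
Proof. by vm_compute. Qed.

Lemma weyl_cancels_char2 : all (weyl_cancels char2_cpoly 1) (iota 0 12).
Proof. by vm_compute. Qed.

Lemma swap_cancels_walt : cancels (cpoly_map bform_swap walt_cpoly ++ cpoly_scale (-1) walt_cpoly).
Proof. by vm_compute. Qed.

Definition x2_coefs_div3 (t : int * bform) :=
  [&& (3 %| t.2`_1)%Z, (3 %| t.2`_3)%Z & (3 %| t.2`_5)%Z].

Section WeylAlternatingSum.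
Variable R : realType.
Variable k : nat.
Local Notation K := (kshift k)%:Z.

Definition walt (y x : int * int) : R := cpoly_eval R k walt_cpoly y x.
Definition char1 (x : int * int) : R := cpoly_eval R k char1_cpoly (0, 0) x.
Definition char2 (x : int * int) : R := cpoly_eval R k char2_cpoly (0, 0) x.

Lemma walt_sym y x : walt y x = walt x y.
Proof.
rewrite /walt -(cpoly_eval_cancels _ _ _ _ swap_cancels_walt).
apply: cpoly_eval_map => t ht.
have /andP [/eqP h4 /eqP h5] : (t.2`_4 == 0) && (t.2`_5 == 0) by move: t ht; apply/allP.
by rewrite [RHS]bform_eval_swap.
Qed.

Lemma cpoly_eval_weyl L det i y x : weyl_cancels L det i ->
  cpoly_eval R k L y (mat2_apply (weyl i) x) = det%:~R * cpoly_eval R k L y x.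
Proof.
move=> hc; rewrite -cpoly_eval_scale -(cpoly_eval_cancels _ _ _ _ hc).
by symmetry; apply: cpoly_eval_map => t _; rewrite bform_eval_subst.
Qed.

Lemma walt_weyl i y x : (i < 12)%N -> walt y (mat2_apply (weyl i) x) = (det2 (weyl i))%:~R * walt y x.
Proof.
move=> hi; apply: cpoly_eval_weyl.
by move/allP: weyl_cancels_walt; apply; rewrite mem_iota.
Qed.

Lemma char1_weyl i x : (i < 12)%N -> char1 (mat2_apply (weyl i) x) = char1 x.
Proof.
move=> hi; rewrite /char1 (@cpoly_eval_weyl _ 1) ?mul1r //.
by move/allP: weyl_cancels_char1; apply; rewrite mem_iota.
Qed.

Lemma char2_weyl i x : (i < 12)%N -> char2 (mat2_apply (weyl i) x) = char2 x.
Proof.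
move=> hi; rewrite /char2 (@cpoly_eval_weyl _ 1) ?mul1r //.
by move/allP: weyl_cancels_char2; apply; rewrite mem_iota.
Qed.

Lemma walt_weyl_character L y x : weyl_character_cancels L y ->
  walt y x = cpoly_eval R k L (0, 0) x * walt (1, 1) x.
Proof.
move=> /(cpoly_eval_cancels R k (0, 0) x).
rewrite -cpoly_eval_mul cpoly_eval_scale => h.
have evalE y' : cpoly_eval R k (cpoly_map (bform_at y') walt_cpoly) (0, 0) x = walt y' x.
  by apply: cpoly_eval_map => f _; rewrite -bform_eval_at.
rewrite !evalE in h.
apply: (@mulfI _ 2); first by rewrite pnatr_eq0.
by rewrite mulrA h.
Qed.

Lemma walt_rho1 x : walt (2, 1) x = char1 x * walt (1, 1) x.
Proof. exact: walt_weyl_character weyl_character_cancels1. Qed.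

Lemma walt_rho2 x : walt (1, 2) x = char2 x * walt (1, 1) x.
Proof. exact: walt_weyl_character weyl_character_cancels2. Qed.

Lemma cpoly_eval_periodic L y x u v : all x2_coefs_div3 L ->
  cpoly_eval R k L y (x.1 + 3 * K * u, x.2 + K * v) = cpoly_eval R k L y x.
Proof.
move=> /allP hL; rewrite /cpoly_eval !big_seq; apply: eq_bigr => t ht.
case/and3P: (hL t ht) => /dvdzP [q1 h1] /dvdzP [q3 h3] /dvdzP [q5 h5].
have -> : bform_eval t.2 y (x.1 + 3 * K * u, x.2 + K * v) = bform_eval t.2 y x + (kperiod k)%:Z *
    (t.2`_0 * y.1 * u + q1 * y.1 * v + t.2`_2 * y.2 * u + q3 * y.2 * v + t.2`_4 * u + q5 * v).
  by rewrite /bform_eval /= h1 h3 h5 kperiodZ; ring.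
by rewrite ecosDperiod.
Qed.

Lemma walt_periodic y x u v : walt y (x.1 + 3 * K * u, x.2 + K * v) = walt y x.
Proof. exact: cpoly_eval_periodic. Qed.

Lemma char1_periodic x u v : char1 (x.1 + 3 * K * u, x.2 + K * v) = char1 x.
Proof. exact: cpoly_eval_periodic. Qed.

Lemma char2_periodic x u v : char2 (x.1 + 3 * K * u, x.2 + K * v) = char2 x.
Proof. exact: cpoly_eval_periodic. Qed.

End WeylAlternatingSum.

Notation box k := ('I_(kperiod k) * 'I_(kshift k))%type.

Section Unfolding.
Variable R : realType.
Variable k : nat.
Local Notation K := (kshift k)%:Z.

Lemma kshiftZ_gt0 : 0 < K. Proof. by rewrite /kshift; lia. Qed.

Definition rho_shift (s : Pk k) : int * int := (((val s).1 : nat).+1%:Z, ((val s).2 : nat).+1%:Z).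

Definition box_pt (x : box k) : int * int := (((x.1 : nat) : int), ((x.2 : nat) : int)).

Definition lattice_eqb (x y : int * int) : bool :=
  (3 * K %| x.1 - y.1)%Z && (K %| x.2 - y.2)%Z.

Lemma lattice_eqP x y : reflect (lattice_eq K x y) (lattice_eqb x y).
Proof.
apply: (iffP andP).
  case=> /dvdzP [u hu] /dvdzP [v hv].
  by exists u, v; case: x y hu hv => [x1 x2] [y1 y2] /= hu hv; congr pair; nia.
case=> u [v ->] /=; split; apply/dvdzP.
  by exists u; ring.
by exists v; ring.
Qed.

Lemma rho_shift_alcove s : in_alcove K (rho_shift s).
Proof. by case: s => [[a b]] /= h; rewrite /in_alcove /rho_shift /kshift /=; split; lia. Qed.

Lemma rho_shift_inj : injective rho_shift.
Proof.
case=> [[a1 a2] h] [[b1 b2] h'] [e1 e2]; apply/val_inj => /=.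
by congr pair; apply/val_inj => /=; lia.
Qed.

Lemma alcove_rho_shift z : in_alcove K z -> exists s : Pk k, rho_shift s = z.
Proof.
case: z => z1 z2; rewrite /in_alcove /kshift /= => [[h1 h2 h3]].
have o1 : (`|z1 - 1| < k.+1)%N by lia.
have o2 : (`|z2 - 1| < k.+1)%N by lia.
have hp : ((Ordinal o1, Ordinal o2).1 + 2 * (Ordinal o1, Ordinal o2).2 <= k)%N by rewrite /=; lia.
by exists (exist _ (Ordinal o1, Ordinal o2) hp); rewrite /rho_shift /=; congr pair; lia.
Qed.

(* Each wall of the alcove is fixed by a reflection ([weyl 1], [weyl 2], or
   [weyl 10] up to a period), and [walt] is anti-invariant under it. *)
Lemma walt_wall0 (z : int * int) : in_hex K z -> 0 <= z.1 -> 0 <= z.2 -> ~ in_alcove K z ->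
  forall y, walt R k y z = 0.
Proof.
case: z => z1 z2; rewrite /in_hex /in_alcove /=.
move=> [/andP[a1 a2] /andP[b1 b2] /andP[c1 c2]] d1 d2 not_alc y.
have walt_antifix i : (i < 12)%N -> det2 (weyl i) = -1 ->
    walt R k y (mat2_apply (weyl i) (z1, z2)) = walt R k y (z1, z2) -> walt R k y (z1, z2) = 0.
  by move=> hi hd; rewrite walt_weyl // hd rmorphN1 mulN1r => h; lra.
have [e|[e|e]] : z1 = 0 \/ z2 = 0 \/ z1 + 2 * z2 = K.
  case: (lerP 1 z1) => ?; last by left; lia.
  case: (lerP 1 z2) => ?; last by right; left; lia.
  right; right; case: (eqVneq (z1 + 2 * z2) K) => // hne.
  by exfalso; apply: not_alc; split => //; lia.
- by apply: (walt_antifix 1%N) => //; congr walt; rewrite /mat2_apply /= e; congr pair; ring.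
- by apply: (walt_antifix 2%N) => //; congr walt; rewrite /mat2_apply /= e; congr pair; ring.
- apply: (walt_antifix 10%N) => //.
  rewrite -(walt_periodic R k y (z1, z2) 0 (-1)); congr walt.
  by rewrite /mat2_apply /= -e; congr pair; ring.
Qed.

Lemma fold_weight x : (forall y, walt R k y x = 0) \/
  exists (i : 'I_12) (s : Pk k), lattice_eq K x (mat2_apply (weyl i) (rho_shift s)).
Proof.
have [i [z [hi hH h1 h2 hx]]] := fold_to_chamber kshiftZ_gt0 x.
have [alc_z|not_alc] := boolP [&& 1 <= z.1, 1 <= z.2 & z.1 + 2 * z.2 <= K - 1].
  right; have [s hs] := alcove_rho_shift (and3P alc_z).
  by exists (Ordinal hi), s; rewrite hs.
left => y; case: hx => u [v ->].
rewrite walt_periodic walt_weyl // (walt_wall0 hH h1 h2) ?mulr0 //.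
by move/and3P: not_alc.
Qed.

Lemma fold_weight_inj (i j : 'I_12) s s' :
  lattice_eq K (mat2_apply (weyl i) (rho_shift s)) (mat2_apply (weyl j) (rho_shift s')) ->
  i = j /\ s = s'.
Proof.
move=> h; have [eij es] := fold_alcove_inj kshiftZ_gt0 (ltn_ord i) (ltn_ord j)
  (rho_shift_alcove s) (rho_shift_alcove s') h.
by split; [apply: val_inj | apply: rho_shift_inj].
Qed.

Lemma box_rep (y : int * int) : exists x0 : box k, lattice_eq K (box_pt x0) y.
Proof.
have hN : 0 < 3 * K by rewrite /kshift; lia.
have e1 := divz_eq y.1 (3 * K); have e2 := divz_eq y.2 K.
have a0 : 0 <= (y.1 %% (3 * K))%Z by rewrite modz_ge0 // gt_eqF.
have a1 : (y.1 %% (3 * K))%Z < 3 * K by rewrite ltz_pmod.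
have b0 : 0 <= (y.2 %% K)%Z by rewrite modz_ge0 // gt_eqF // kshiftZ_gt0.
have b1 : (y.2 %% K)%Z < K by rewrite ltz_pmod // kshiftZ_gt0.
have o1 : (`|(y.1 %% (3 * K))%Z| < kperiod k)%N.
  by move: a0 a1; set r := (y.1 %% (3 * K))%Z; rewrite /kperiod /kshift; lia.
have o2 : (`|(y.2 %% K)%Z| < kshift k)%N.
  by move: b0 b1; set r := (y.2 %% K)%Z; rewrite /kshift; lia.
exists (Ordinal o1, Ordinal o2); exists (- (y.1 %/ (3 * K))%Z), (- (y.2 %/ K)%Z).
rewrite /box_pt /=; case: y e1 e2 {o1 o2 a1 b1} a0 b0 => y1 y2 /= e1 e2 a0 b0.
rewrite !gez0_abs //; congr pair.
  by rewrite {2}e1; ring.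
by rewrite {2}e2; ring.
Qed.

Lemma residue_unique (c a a' u : int) : 0 < c -> 0 <= a < c -> 0 <= a' < c -> a = a' + c * u -> u = 0.
Proof.
move=> c0 /andP[h1 h2] /andP[h3 h4] e.
case: (ltrgtP u 0) => // hu.
  have : c * u <= - c by rewrite -mulrN1 ler_pM2l //; lia.
  lia.
have : c <= c * u by rewrite -{1}(mulr1 c) ler_pM2l //; lia.
lia.
Qed.

Lemma box_pt_inj (x x' : box k) : lattice_eq K (box_pt x) (box_pt x') -> x = x'.
Proof.
case: x x' => [a b] [a' b'] [u [v [h1 h2]]].
have := ltn_ord a; have := ltn_ord a'; have := ltn_ord b; have := ltn_ord b'.
rewrite /kperiod => hb' hb ha' ha.
have u0 : u = 0 by apply: (@residue_unique (3 * K) a a') => //; rewrite /kshift; lia.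
have v0 : v = 0 by apply: (@residue_unique K b b') => //; rewrite /kshift; lia.
move: h1 h2; rewrite u0 v0 !mulr0 !addr0.
by move=> /= [/ord_inj ->] [/ord_inj ->].
Qed.

(* Every box point is, up to periods, either on a wall (where the summands
   vanish) or the image of exactly one (i, s) in 'I_12 * Pk k. *)
Lemma sum_box_unfold (f : int * int -> R) :
  (forall x u v, f (x.1 + 3 * K * u, x.2 + K * v) = f x) ->
  (forall i x, (i < 12)%N -> f (mat2_apply (weyl i) x) = f x) ->
  (forall x, (forall y, walt R k y x = 0) -> f x = 0) ->
  \sum_(x : box k) f (box_pt x) = 12 * \sum_(s : Pk k) f (rho_shift s).
Proof.
move=> f_per f_weyl f_wall.
have f_lattice x y : lattice_eq K x y -> f x = f y by case=> u [v ->]; rewrite f_per.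
pose hit (p : 'I_12 * Pk k) (x : box k) :=
  lattice_eqb (box_pt x) (mat2_apply (weyl p.1) (rho_shift p.2)).
have by_preimage x : f (box_pt x) = \sum_(p : 'I_12 * Pk k) (if hit p x then f (box_pt x) else 0).
  case: (fold_weight (box_pt x)) => [hw|[i [s hc]]].
    by rewrite (f_wall _ hw) big1 // => p _; case: ifP.
  rewrite (bigD1 (i, s)) /hit //= (introT (lattice_eqP _ _) hc) big1 ?addr0 // => [[j s']] /= hne.
  case: lattice_eqP => // hc'.
  have [ej es] := fold_weight_inj (lattice_eq_trans (lattice_eq_sym hc') hc).
  by move: hne; rewrite ej es eqxx.
have by_image p : \sum_(x : box k) (if hit p x then f (box_pt x) else 0) = f (rho_shift p.2).
  case: p => i s /=; have [x0 hx0] := box_rep (mat2_apply (weyl i) (rho_shift s)).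
  rewrite (bigD1 x0) /hit //= (introT (lattice_eqP _ _) hx0) big1 ?addr0.
    by rewrite (f_lattice _ _ hx0) f_weyl.
  move=> x hne; case: lattice_eqP => // hc.
  by move: hne; rewrite (box_pt_inj (lattice_eq_trans hc (lattice_eq_sym hx0))) eqxx.
rewrite (eq_bigr _ (fun x _ => by_preimage x)) exchange_big /=.
rewrite (eq_bigr _ (fun p _ => by_image p)).
rewrite -(pair_big xpredT xpredT (fun (i : 'I_12) (s : Pk k) => f (rho_shift s))) /=.
by rewrite sumr_const card_ord mulr_natl.
Qed.

End Unfolding.

Definition pairing (z x : int * int) : int := (2 * z.1 + 3 * z.2) * x.1 + 3 * (z.1 + 2 * z.2) * x.2.

Definition vadd (z z' : int * int) : int * int := (z.1 + z'.1, z.2 + z'.2).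
Definition vsub (z z' : int * int) : int * int := (z.1 - z'.1, z.2 - z'.2).

Lemma pairing_vadd z z' x : pairing (vadd z z') x = pairing z x + pairing z' x.
Proof. by rewrite /pairing /vadd /=; ring. Qed.

Lemma pairing_vsub z z' x : pairing (vsub z z') x = pairing z x - pairing z' x.
Proof. by rewrite /pairing /vsub /=; ring. Qed.

(* The indices [i] and signs [det (weyl i)] of the six terms of [walt_cpoly]. *)
Definition walt_terms : seq (int * nat) :=
  [:: (1, 0%N); (1, 7%N); (1, 8%N); (-1, 10%N); (-1, 2%N); (-1, 5%N)].

Section Orthogonality.
Variable R : realType.
Variable k : nat.
Local Notation K := (kshift k)%:Z.
Local Notation N := (kperiod k).
Local Notation ecos := (ecos R k).

Lemma sum_box_ecos (A C : int) :
  \sum_(x : box k) ecos (A * (box_pt x).1 + 3 * C * (box_pt x).2)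
  = if (N%:Z %| A)%Z && (K %| C)%Z then (N * kshift k)%:R else 0.
Proof.
have hK : ((kshift k)%:R : R) != 0 by rewrite pnatr_eq0 -lt0n kshift_gt0.
rewrite -(pair_big xpredT xpredT
  (fun (x1 : 'I_N) (x2 : 'I_(kshift k)) => ecos (A * x1%:Z + 3 * C * x2%:Z))) /=.
have inner (x1 : 'I_N) : \sum_(x2 < kshift k) ecos (A * x1%:Z + 3 * C * x2%:Z)
   = if (K %| C)%Z then (kshift k)%:R * ecos (A * x1%:Z) else 0.
  rewrite -(sum_cos_progression _ _ (kshift_gt0 k)); apply: eq_bigr => x2 _.
  rewrite /ecos rmorphD mulrDr; congr (cos (_ + _)).
  by rewrite !rmorphM /= xiE /kperiod natrM; field.
rewrite (eq_bigr _ (fun x1 _ => inner x1)).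
case: (K %| C)%Z; last by rewrite andbF big1.
rewrite andbT -mulr_sumr.
have -> : \sum_(x1 < N) ecos (A * x1%:Z) = \sum_(x1 < N) cos (0 + pi *+ 2 * A%:~R * x1%:R / N%:R).
  by apply: eq_bigr => x1 _; rewrite /ecos add0r rmorphM /= mulrA xiE; congr cos; ring.
rewrite sum_cos_progression ?kperiod_gt0 // cos0 mulr1 natrM.
by case: ifP; rewrite ?mulr0 // mulrC.
Qed.

Lemma walt_weylE y x :
  walt R k y x = \sum_(t <- walt_terms) t.1%:~R * ecos (pairing (mat2_apply (weyl t.2) y) x).
Proof.
rewrite /walt /cpoly_eval !big_cons !big_nil /= /bform_eval /pairing /mat2_apply /=.
by repeat (congr (_ + _); first by congr (_ * ecos _); ring).
Qed.

Definition pairing_trivial (w : int * int) : bool :=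
  (N%:Z %| 2 * w.1 + 3 * w.2)%Z && (K %| w.1 + 2 * w.2)%Z.

Lemma pairing_trivialE z z' : pairing_trivial (vsub z z') = lattice_eqb k z z'.
Proof.
rewrite /pairing_trivial /lattice_eqb /vsub kperiodZ /=.
set a := z.1 - z'.1; set b := z.2 - z'.2.
apply/idP/idP => /andP [/dvdzP [p hp] /dvdzP [q hq]]; apply/andP; split; apply/dvdzP.
- by exists (2 * p - q); nia.
- by exists (2 * q - 3 * p); nia.
- by exists (2 * p + q); rewrite hp hq; ring.
- by exists (3 * p + 2 * q); rewrite hp hq; ring.
Qed.

Lemma sum_box_ecos_pairing2 z z' :
  \sum_(x : box k) ecos (pairing z (box_pt x)) * ecos (pairing z' (box_pt x)) =
  ((N * kshift k)%:R / 2) * ((pairing_trivial (vadd z z'))%:R + (pairing_trivial (vsub z z'))%:R).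
Proof.
have h2 : (2 : R) != 0 by rewrite pnatr_eq0.
have prod (x : box k) : ecos (pairing z (box_pt x)) * ecos (pairing z' (box_pt x)) =
    (ecos (pairing (vadd z z') (box_pt x)) + ecos (pairing (vsub z z') (box_pt x))) / 2.
  by rewrite pairing_vadd pairing_vsub -ecos_prod; field.
rewrite (eq_bigr _ (fun x _ => prod x)) -mulr_suml big_split /=.
rewrite /pairing /vadd /vsub /= !sum_box_ecos /pairing_trivial /=.
by case: ifP; case: ifP => _ _ /=; field.
Qed.

Lemma walt_terms_lt12 t : t \in walt_terms -> (t.2 < 12)%N.
Proof. by move: t; apply/allP. Qed.

Lemma pairing_trivial_sub u u' (l m : Pk k) : (u < 12)%N -> (u' < 12)%N ->
  pairing_trivial (vsub (mat2_apply (weyl u) (rho_shift l)) (mat2_apply (weyl u') (rho_shift m)))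
  = (u == u') && (l == m).
Proof.
move=> lu lu'; rewrite pairing_trivialE; apply/idP/idP.
  move/lattice_eqP => h.
  have [[e1] e2] := fold_weight_inj (i := Ordinal lu) (j := Ordinal lu') h.
  by rewrite e1 e2 !eqxx.
case/andP => /eqP <- /eqP <-; apply/lattice_eqP; exists 0, 0.
by case: (mat2_apply _ _) => a b /=; rewrite !mulr0 !addr0.
Qed.

Lemma pairing_trivial_add t t' (l m : Pk k) : t \in walt_terms -> t' \in walt_terms ->
  pairing_trivial (vadd (mat2_apply (weyl t.2) (rho_shift l)) (mat2_apply (weyl t'.2) (rho_shift m)))
  = false.
Proof.
move=> ht ht'; have lu := walt_terms_lt12 ht; have lu' := walt_terms_lt12 ht'.
have l11 : (11 - t'.2 < 12)%N by lia.
rewrite (_ : vadd _ _ = vsub (mat2_apply (weyl t.2) (rho_shift l))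
                             (mat2_apply (weyl (11 - t'.2)) (rho_shift m))); last first.
  by rewrite /vadd /vsub (weyl_opp _ lu') /= !opprK.
rewrite pairing_trivial_sub //; apply/negbTE; rewrite negb_and; apply/orP; left.
have : all (fun t => all (fun t' : int * nat => t.2 != (11 - t'.2)%N) walt_terms) walt_terms by [].
by move/allP => /(_ _ ht)/allP/(_ _ ht').
Qed.

Lemma sum_box_walt2 (l m : Pk k) :
  \sum_(x : box k) walt R k (rho_shift l) (box_pt x) * walt R k (rho_shift m) (box_pt x)
  = if l == m then (3 * N * kshift k)%:R else 0.
Proof.
pose E (t : int * nat) (l : Pk k) (x : box k) :=
  ecos (pairing (mat2_apply (weyl t.2) (rho_shift l)) (box_pt x)).
have expand (x : box k) : walt R k (rho_shift l) (box_pt x) * walt R k (rho_shift m) (box_pt x) =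
   \sum_(t <- walt_terms) \sum_(t' <- walt_terms) (t.1 * t'.1)%:~R * (E t l x * E t' m x).
  rewrite !walt_weylE big_distrlr /=; apply: eq_bigr => t _; apply: eq_bigr => t' _.
  by rewrite rmorphM /= /E; ring.
rewrite (eq_bigr _ (fun x _ => expand x)) exchange_big /=.
under eq_bigr => t _ do rewrite exchange_big /=.
transitivity (\sum_(t <- walt_terms) \sum_(t' <- walt_terms)
   (t.1 * t'.1)%:~R * (((N * kshift k)%:R / 2) * ((t.2 == t'.2) && (l == m))%:R) : R).
  apply: eq_big_seq => t ht; apply: eq_big_seq => t' ht'.
  rewrite -mulr_sumr sum_box_ecos_pairing2 pairing_trivial_add //.
  by rewrite pairing_trivial_sub ?add0r ?walt_terms_lt12.
have h2 : (2 : R) != 0 by rewrite pnatr_eq0.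
case: eqP => _; rewrite /walt_terms !big_cons !big_nil /= ?andbT ?andbF ?natrM.
all: by field.
Qed.

End Orthogonality.

Section SMatrix.
Variable R : realType.
Variable k : nat.

Definition Snorm : R := (-2) / ((k + 4)%:R * Num.sqrt 3).

Lemma Snorm_neq0 : Snorm != 0.
Proof.
rewrite /Snorm mulf_neq0 ?oppr_eq0 ?pnatr_eq0 // invr_eq0 mulf_neq0 ?pnatr_eq0 ?addn4 //.
by rewrite sqrtr_eq0 -ltNge ltr0n.
Qed.

Lemma sqr_sqrt3 : Num.sqrt (3 : R) ^+ 2 = 3.
Proof. by rewrite sqr_sqrtr // ler0n. Qed.

Lemma Sent_walt l1 l2 m1 m2 :
  Sent R k l1 l2 m1 m2 = Snorm * walt R k ((l1.+1)%:Z, (l2.+1)%:Z) ((m1.+1)%:Z, (m2.+1)%:Z).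
Proof.
rewrite /Sent /Snorm /walt /cpoly_eval !big_cons big_nil /=; congr (_ * _).
have -> : ((l1 + l2 + 2)%N : int) = (l1.+1 : int) + (l2.+1 : int) by lia.
have -> : ((m1 + m2 + 2)%N : int) = (m1.+1 : int) + (m2.+1 : int) by lia.
rewrite !addn1 /bform_eval /= rmorphN1 /= !mulN1r !mul1r !addr0 !addrA /ecos.
have cos_congr (a b : int) : a = b -> cos (2 * xi R k * a%:~R) = cos (2 * xi R k * b%:~R) by move->.
by congr (_ + _ + _ + _ + _ + _); try congr (- _); apply: cos_congr; ring.
Qed.

Lemma S_walt (l m : Pk k) : S R k l m = Snorm * walt R k (rho_shift l) (rho_shift m).
Proof. exact: Sent_walt. Qed.

Lemma S_sym (l m : Pk k) : S R k l m = S R k m l.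
Proof. by rewrite !S_walt walt_sym. Qed.

Lemma sum_walt2_unfold (l m : Pk k) :
  \sum_(s : Pk k) walt R k (rho_shift l) (rho_shift s) * walt R k (rho_shift m) (rho_shift s) =
  12^-1 * \sum_(x : box k) walt R k (rho_shift l) (box_pt x) * walt R k (rho_shift m) (box_pt x).
Proof.
rewrite (sum_box_unfold (f := fun x => walt R k (rho_shift l) x * walt R k (rho_shift m) x)).
- by rewrite mulrA mulVf ?mul1r // pnatr_eq0.
- by move=> x u v; rewrite !walt_periodic.
- move=> i x hi; rewrite !walt_weyl // mulrACA -rmorphM /=.
  by rewrite det2_weyl_sqr // mul1r.
- by move=> x h; rewrite h mul0r.
Qed.

Lemma S_mulS (l m : Pk k) : \sum_(s : Pk k) S R k l s * S R k s m = (l == m)%:R.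
Proof.
under eq_bigr => s _ do rewrite (S_sym s m) !S_walt mulrACA.
rewrite -mulr_sumr sum_walt2_unfold sum_box_walt2.
case: eqP => _ /=; last by rewrite !mulr0.
have h3 : Num.sqrt (3 : R) != 0 by rewrite sqrtr_eq0 -ltNge ltr0n.
have hk : ((k + 4)%:R : R) != 0 by rewrite pnatr_eq0 addn4.
rewrite /Snorm /kperiod /kshift !natrM -expr2 expr_div_n exprMn sqr_sqrt3.
by field; rewrite -?natrD ?pnatr_eq0 ?addn4.
Qed.

Definition Smul (v : Pk k -> R) (l : Pk k) : R := \sum_(s : Pk k) S R k l s * v s.

(* S_{rho,s} / S_{0,s}, the eigenvalue of [Amat k r1 r2] at the eigenvector S_{., s}. *)
Definition Sratio (r1 r2 : nat) (s : Pk k) : R :=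
  Sent R k r1 r2 (val s).1 (val s).2 / Sent R k 0 0 (val s).1 (val s).2.

Lemma SmulK v l : Smul (Smul v) l = v l.
Proof.
transitivity (\sum_(t : Pk k) (\sum_(s : Pk k) S R k l s * S R k s t) * v t).
  rewrite /Smul; under eq_bigr => s _ do rewrite mulr_sumr.
  rewrite exchange_big /=; apply: eq_bigr => t _; rewrite mulr_suml.
  by apply: eq_bigr => s _; rewrite mulrA.
under eq_bigr => t _ do rewrite S_mulS.
rewrite (bigD1 l) //= eqxx mul1r big1 ?addr0 // => t /negbTE.
by rewrite eq_sym => ->; rewrite mul0r.
Qed.

Lemma mapply_Amat r1 r2 v l :
  mapply R k (Amat R k r1 r2) v l = Smul (fun s => Sratio r1 r2 s * Smul v s) l.
Proof.
rewrite /mapply /Amat /Smul.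
under eq_bigr => mu _ do rewrite mulr_suml.
rewrite exchange_big /=; apply: eq_bigr => s _.
rewrite !mulr_sumr; apply: eq_bigr => mu _.
by rewrite (S_sym mu s) /Sratio; ring.
Qed.

Lemma iter_mapply_Amat r1 r2 n (v g : Pk k -> R) : (forall l, v l = Smul g l) ->
  forall l, iter n (mapply R k (Amat R k r1 r2)) v l = Smul (fun s => Sratio r1 r2 s ^+ n * g s) l.
Proof.
move=> hv; elim: n => [|n IH] l /=.
  by rewrite hv; apply: eq_bigr => s _; rewrite expr0 mul1r.
rewrite /mapply (eq_bigr _ (fun mu _ => congr1 (fun w => Amat R k r1 r2 l mu * w) (IH mu))).
rewrite -/(mapply R k (Amat R k r1 r2) _ l) mapply_Amat.
by apply: eq_bigr => s _; rewrite SmulK exprS; ring.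
Qed.

Lemma moment_Sratio m n : moment k m n =
  \sum_(s : Pk k) S R k (Pk0 k) s ^+ 2 * Sratio 1 0 s ^+ m * Sratio 0 1 s ^+ n.
Proof.
have e0E l : e0 R k l = Smul (fun s => S R k s (Pk0 k)) l by rewrite /Smul S_mulS /e0; case: eqP.
rewrite /moment /A1 (iter_mapply_Amat 1 0 m (iter_mapply_Amat 0 1 n e0E)).
by apply: eq_bigr => s _; rewrite (S_sym s); ring.
Qed.

End SMatrix.

Section OrdModz.
Variable n : nat.
Hypothesis n_gt0 : (0 < n)%N.

Lemma ord_modz_subproof (a : int) : (`|(a %% n%:Z)%Z| < n)%N.
Proof.
have h0 : 0 <= (a %% n%:Z)%Z by rewrite modz_ge0 //; lia.
have h1 : (a %% n%:Z)%Z < n%:Z by rewrite ltz_pmod //; lia.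
by move: h0 h1; set r := (a %% n%:Z)%Z; lia.
Qed.

Definition ord_modz (a : int) : 'I_n := Ordinal (ord_modz_subproof a).

Lemma ord_modzE a : ((ord_modz a : nat) : int) = (a %% n%:Z)%Z.
Proof. by rewrite /ord_modz /= gez0_abs // modz_ge0 //; lia. Qed.

Lemma ord_modz_cong a : exists c, ((ord_modz a : nat) : int) = a + n%:Z * c.
Proof. by exists (- (a %/ n%:Z)%Z); rewrite ord_modzE {2}(divz_eq a n%:Z); ring. Qed.

Lemma ord_modz_eq (a : int) (x : 'I_n) c : a = (x : nat)%:Z + n%:Z * c -> ord_modz a = x.
Proof.
move=> ->; apply: ord_inj; apply/eqP; rewrite -eqz_nat ord_modzE mulrC addrC modzMDl.
by rewrite modz_small //; apply/andP; split => //; rewrite ltz_nat.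
Qed.

End OrdModz.

Section FkWReindexing.
Variable k : nat.
Local Notation N := (kperiod k).
Local Notation K := (kshift k)%:Z.

(* x |-> q = (2 x1 + 3 x2, x1 + 3 x2) mod N is a bijection from the box onto
   the index set of F_k^W; it is the change of coordinates between the
   rho-shifted weight lattice and the torus parameters (t1, t2) = q / N. *)
Definition box_to_FkW (x : box k) : 'I_N * 'I_N :=
  (ord_modz (kperiod_gt0 k) (2 * (x.1 : nat)%:Z + 3 * (x.2 : nat)%:Z),
   ord_modz (kperiod_gt0 k) ((x.1 : nat)%:Z + 3 * (x.2 : nat)%:Z)).

Definition FkW_to_box (q : 'I_N * 'I_N) : box k :=
  (ord_modz (kperiod_gt0 k) ((q.1 : nat)%:Z - (q.2 : nat)%:Z),
   ord_modz (kshift_gt0 k) ((2 * (q.2 : nat)%:Z - (q.1 : nat)%:Z) %/ 3)%Z).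

Lemma box_to_FkW_cong x : exists a b,
  (((box_to_FkW x).1 : nat) : int) = 2 * (x.1 : nat)%:Z + 3 * (x.2 : nat)%:Z + N%:Z * a /\
  (((box_to_FkW x).2 : nat) : int) = (x.1 : nat)%:Z + 3 * (x.2 : nat)%:Z + N%:Z * b.
Proof.
have [a ha] := ord_modz_cong (kperiod_gt0 k) (2 * (x.1 : nat)%:Z + 3 * (x.2 : nat)%:Z).
have [b hb] := ord_modz_cong (kperiod_gt0 k) ((x.1 : nat)%:Z + 3 * (x.2 : nat)%:Z).
by exists a, b.
Qed.

Lemma box_to_FkWK x : FkW_to_box (box_to_FkW x) = x.
Proof.
have [a [b [ha hb]]] := box_to_FkW_cong x.
case: x ha hb => x1 x2 ha hb; rewrite /FkW_to_box /=; congr pair.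
  by apply: (@ord_modz_eq _ _ _ _ (a - b)); rewrite ha hb /=; ring.
apply: (@ord_modz_eq _ _ _ _ (2 * b - a)).
rewrite ha hb /= (_ : 2 * _ - _ = 3 * ((x2 : nat)%:Z + K * (2 * b - a))).
  by rewrite mulKz.
by rewrite kperiodZ; ring.
Qed.

Lemma box_to_FkW_pred x : FkW_pred k (box_to_FkW x).
Proof.
have [a [b [ha hb]]] := box_to_FkW_cong x.
rewrite /FkW_pred -[(_ %% 3 == 0)%N]/(3 %| ((box_to_FkW x).1 + (box_to_FkW x).2)%N%:Z)%Z.
rewrite PoszD ha hb; apply/dvdzP.
by exists ((x.1 : nat)%:Z + 2 * (x.2 : nat)%:Z + K * (a + b)); rewrite kperiodZ; ring.
Qed.

Lemma FkW_to_boxK q : FkW_pred k q -> box_to_FkW (FkW_to_box q) = q.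
Proof.
rewrite /FkW_pred -[(_ %% 3 == 0)%N]/(3 %| (q.1 + q.2)%N%:Z)%Z PoszD => /dvdzP [f hf].
have hdiv : ((2 * (q.2 : nat)%:Z - (q.1 : nat)%:Z) %/ 3)%Z = 2 * f - (q.1 : nat)%:Z.
  by rewrite (_ : _ - _ = 3 * (2 * f - (q.1 : nat)%:Z)) ?mulKz //; lia.
have [c1 h1] := ord_modz_cong (kperiod_gt0 k) ((q.1 : nat)%:Z - (q.2 : nat)%:Z).
have [c2 h2] := ord_modz_cong (kshift_gt0 k) ((2 * (q.2 : nat)%:Z - (q.1 : nat)%:Z) %/ 3)%Z.
rewrite hdiv in h2.
have q2E : ((q.2 : nat) : int) = f * 3 - (q.1 : nat)%:Z by rewrite -hf; ring.
case: q hf hdiv h1 h2 q2E => q1 q2 /= hf hdiv h1 h2 q2E.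
rewrite /box_to_FkW /FkW_to_box /= hdiv; congr pair.
  apply: (@ord_modz_eq _ _ _ _ (2 * c1 + c2)).
  by rewrite h1 h2 kperiodZ /= q2E; ring.
apply: (@ord_modz_eq _ _ _ _ (c1 + c2)).
by rewrite h1 h2 kperiodZ /= q2E; ring.
Qed.

Lemma card_FkW : #|[set q : 'I_N * 'I_N | FkW_pred k q]| = (N * kshift k)%N.
Proof.
rewrite -sum1_card (eq_bigl (fun q => FkW_pred k q)); last by move=> q; rewrite inE.
rewrite (reindex_onto box_to_FkW FkW_to_box); last by move=> q; exact: FkW_to_boxK.
rewrite (eq_bigl xpredT); last by move=> x; rewrite box_to_FkW_pred box_to_FkWK eqxx.
by rewrite sum1_card card_prod !card_ord.
Qed.

End FkWReindexing.

Definition J_cpoly : cpoly :=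
  [:: (1, lin_bform 5 9); (1, lin_bform (-1) (-6)); (1, lin_bform 4 3);
      (-1, lin_bform 4 9); (-1, lin_bform 5 6); (-1, lin_bform 1 (-3))].

Lemma J_cancels : cancels (J_cpoly ++ cpoly_scale (-1) (cpoly_map (bform_at (1, 1)) walt_cpoly)).
Proof. by vm_compute. Qed.

Section TorusPoints.
Variable R : realType.
Variable k : nat.
Local Notation N := (kperiod k).
Local Notation ecos := (ecos R k).

Lemma J_cpoly_walt x : cpoly_eval R k J_cpoly (0, 0) x = walt R k (1, 1) x.
Proof.
rewrite (cpoly_eval_cancels _ _ _ _ J_cancels).
by apply: cpoly_eval_map => t _; rewrite -bform_eval_at.
Qed.

Variables (q1 q2 : nat) (x1 x2 a b : int).
Hypothesis q1E : q1%:Z = 2 * x1 + 3 * x2 + N%:Z * a.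
Hypothesis q2E : q2%:Z = x1 + 3 * x2 + N%:Z * b.
Local Notation t1 := ((q1%:R : R) / (3 * (k + 4))%:R).
Local Notation t2 := ((q2%:R : R) / (3 * (k + 4))%:R).

Lemma cos_torus (c1 c2 z : int) (r : R) : r = c1%:~R * t1 + c2%:~R * t2 ->
  z = c1 * (2 * x1 + 3 * x2) + c2 * (x1 + 3 * x2) -> cos (2 * pi * r) = ecos z.
Proof.
move=> -> ->.
have -> : c1%:~R * t1 + c2%:~R * t2 = (c1 * q1%:Z + c2 * q2%:Z)%:~R / N%:R :> R.
  by rewrite intrD !intrM !pmulrn /kperiod /kshift; ring.
rewrite -(ecosDperiod R k _ (c1 * a + c2 * b)) /ecos xiE q1E q2E -mulr_natl.
have -> : c1 * (2 * x1 + 3 * x2 + N%:Z * a) + c2 * (x1 + 3 * x2 + N%:Z * b) =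
    c1 * (2 * x1 + 3 * x2) + c2 * (x1 + 3 * x2) + N%:Z * (c1 * a + c2 * b) by ring.
by congr cos; ring.
Qed.

Lemma chi1_torus : chi1 t1 t2 = char1 R k (x1, x2).
Proof.
rewrite /chi1 /char1 /cpoly_eval !big_cons big_nil !bform_eval_lin /=.
rewrite (@cos_torus 1 0 (2 * x1 + 3 * x2)); [|by ring|by ring].
rewrite (@cos_torus 0 1 (1 * x1 + 3 * x2)); [|by ring|by ring].
rewrite (@cos_torus 1 (-1) (1 * x1 + 0 * x2)); [|by rewrite rmorphN; ring|by ring].
by rewrite !mul0r addr0 ecos0; ring.
Qed.

Lemma chi2_torus : chi2 t1 t2 = char2 R k (x1, x2).
Proof.
rewrite /chi2 chi1_torus /char2 /char1 cpoly_eval_cat /cpoly_eval !big_cons big_nil.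
rewrite !bform_eval_lin /=.
rewrite (@cos_torus 1 1 (3 * x1 + 6 * x2)); [|by ring|by ring].
rewrite (@cos_torus 2 (-1) (3 * x1 + 3 * x2)); [|by rewrite rmorphN; ring|by ring].
rewrite (@cos_torus 1 (-2) (0 * x1 + -3 * x2)); [|by rewrite rmorphN; ring|by ring].
by rewrite !mul0r addr0 ecos0; ring.
Qed.

Lemma J_torus : J t1 t2 = 8 * pi ^+ 2 * walt R k (1, 1) (x1, x2).
Proof.
rewrite -J_cpoly_walt /J /cpoly_eval !big_cons big_nil !bform_eval_lin /=.
rewrite (@cos_torus 2 1 (5 * x1 + 9 * x2)); [|by ring|by ring].
rewrite (@cos_torus 1 (-3) (-1 * x1 + -6 * x2)); [|by rewrite rmorphN; ring|by ring].
rewrite (@cos_torus 3 (-2) (4 * x1 + 3 * x2)); [|by rewrite rmorphN; ring|by ring].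
rewrite (@cos_torus 1 2 (4 * x1 + 9 * x2)); [|by ring|by ring].
rewrite (@cos_torus 3 (-1) (5 * x1 + 6 * x2)); [|by rewrite rmorphN; ring|by ring].
rewrite (@cos_torus 2 (-3) (1 * x1 + -3 * x2)); [|by rewrite rmorphN; ring|by ring].
ring.
Qed.

End TorusPoints.

Section MomentFormula.
Variable R : realType.
Variable k : nat.

Lemma Sratio_char1 (s : Pk k) :
  walt R k (1, 1) (rho_shift s) != 0 -> Sratio R 1 0 s = char1 R k (rho_shift s).
Proof.
move=> hw; rewrite /Sratio !Sent_walt -[(2%:Z, 1%:Z)]/(2, 1) walt_rho1.
by field; rewrite hw Snorm_neq0.
Qed.

Lemma Sratio_char2 (s : Pk k) :
  walt R k (1, 1) (rho_shift s) != 0 -> Sratio R 0 1 s = char2 R k (rho_shift s).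
Proof.
move=> hw; rewrite /Sratio !Sent_walt -[(1%:Z, 2%:Z)]/(1, 2) walt_rho2.
by field; rewrite hw Snorm_neq0.
Qed.

Variables m n : nat.

Definition integrand (x : int * int) : R :=
  char1 R k x ^+ m * char2 R k x ^+ n * walt R k (1, 1) x ^+ 2.

Lemma moment_alcove_sum : moment k m n = Snorm R k ^+ 2 * \sum_(s : Pk k) integrand (rho_shift s).
Proof.
rewrite moment_Sratio mulr_sumr; apply: eq_bigr => s _.
rewrite S_walt /integrand; have [->|hw] := eqVneq (walt R k (1, 1) (rho_shift s)) 0; first by ring.
by rewrite Sratio_char1 // Sratio_char2 //; ring.
Qed.

Lemma sum_box_integrand :
  \sum_(x : box k) integrand (box_pt x) = 12 * \sum_(s : Pk k) integrand (rho_shift s).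
Proof.
apply: sum_box_unfold.
- by move=> x u v; rewrite /integrand char1_periodic char2_periodic walt_periodic.
- move=> i x hi; rewrite /integrand char1_weyl // char2_weyl // walt_weyl //.
  by rewrite exprMn expr2 -rmorphM /= det2_weyl_sqr // mul1r.
- by move=> x h; rewrite /integrand h expr0n /= mulr0.
Qed.

Lemma dk_integral_alcove_sum : (192 * pi ^+ 4)^-1 *
  dk_integral k (fun t1 t2 : R => chi1 t1 t2 ^+ m * chi2 t1 t2 ^+ n * J t1 t2 ^+ 2) =
  Snorm R k ^+ 2 * \sum_(s : Pk k) integrand (rho_shift s).
Proof.
rewrite /dk_integral -[(3 * (k + 4))%N]/(kperiod k) card_FkW.
rewrite (reindex_onto (@box_to_FkW k) (@FkW_to_box k)); last by move=> q; exact: FkW_to_boxK.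
rewrite (eq_bigl xpredT); last by move=> x; rewrite box_to_FkW_pred box_to_FkWK eqxx.
under eq_bigr => x _.
  have [a [b [ha hb]]] := box_to_FkW_cong x.
  rewrite (chi1_torus R ha hb) (chi2_torus R ha hb) (J_torus R ha hb).
  rewrite (_ : _ * _ = (8 * pi ^+ 2) ^+ 2 * integrand (box_pt x)); last first.
    by rewrite /integrand /box_pt; ring.
  over.
rewrite -mulr_sumr sum_box_integrand.
have pi_neq0 : pi != 0 :> R by rewrite gt_eqF // pi_gt0.
have hk : ((k + 4)%:R : R) != 0 by rewrite pnatr_eq0 addn4.
have h3 : Num.sqrt (3 : R) != 0 by rewrite sqrtr_eq0 -ltNge ltr0n.
rewrite /Snorm /kperiod /kshift !natrM expr_div_n !exprMn sqr_sqrt3.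
move: pi_neq0; move: (pi : R) => p p_neq0.
by field; rewrite -?natrD ?pnatr_eq0 ?addn4 ?p_neq0.
Qed.

End MomentFormula.

Theorem mainTheorem3 (R : realType) (k m n : nat) :
  @moment R k m n =
  (192 * pi ^+ 4)^-1 *
  dk_integral k (fun t1 t2 : R => chi1 t1 t2 ^+ m * chi2 t1 t2 ^+ n * J t1 t2 ^+ 2).
Proof. by rewrite moment_alcove_sum dk_integral_alcove_sum. Qed.
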